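(* Let $(\Re,\oplus,\circ)$ be a commutative Krasner hyperring with identity $1\neq 0$, let $N$ be a proper hyperideal of $\Re$, and let $\phi:L(\Re)\to L(\Re)\cup\{\emptyset\}$ be a function with $\phi(N)\subseteq N$. Then the following are equivalent: (i) $N$ is a $\phi$-prime hyperideal of $\Re$; (ii) for every $a\in\Re- N$, $(N:a)=N\cup(\phi(N):a)$; (iii) for every $a\in\Re- N$, $(N:a)=N$ or $(N:a)=(\phi(N):a)$; (iv) for all hyperideals $K,L$ of $\Re$ with $K\circ L\subseteq N$ and $K\circ L\not\subseteq\phi(N)$, we have $K\subseteq N$ or $L\subseteq N$.
   Context: A commutative Krasner hyperring with identity is $(\Re,\oplus,\circ)$ where $(\Re,\oplus)$ is a canonical hypergroup (the hyperoperation $\oplus:\Re\times\Re\to P^*(\Re)$ is associative and commutative; there is $0$ with $a\oplus 0=\{a\}$; each $a$ has a unique $-a$ with $0\in a\oplus(-a)$; and $c\in a\oplus b$ implies $b\in c\oplus(-a)$ and $a\in c\oplus(-b)$), $(\Re,\circ)$ is a commutative semigroup with identity $1\neq0$ and $a\circ 0=0$, and $\circ$ distributes over $\oplus$. A hyperideal is a nonempty $N\subseteq\Re$ with $a\oplus(-b)\subseteq N$ and $r\circ a\in N$ for all $a,b\in N$, $r\in\Re$; $L(\Re)$ is the set of hyperideals. For $I\in L(\Re)\cup\{\emptyset\}$ and $a\in\Re$, $(I:a)=\{x\in\Re: x\circ a\in I\}$. For hyperideals $K,L$, $K\circ L$ is the hyperideal generated by $\{k\circ l: k\in K,l\in L\}$.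 ''$x\in N-\phi(N)$'' means $x\in N$ and $x\notin\phi(N)$. A hyperideal $N$ is $\phi$-prime if for all $a,b\in\Re$, $a\circ b\in N-\phi(N)$ implies $a\in N$ or $b\in N$. *)

Set Implicit Arguments.

(* A commutative Krasner hyperring with identity. The hyperoperation is
   represented as a relation: [hadd a b c] means c \in a (+) b. *)
Record KrasnerHyperring := {
  carrier :> Type;
  hadd : carrier -> carrier -> carrier -> Prop;
  hmul : carrier -> carrier -> carrier;
  hzero : carrier;
  hone : carrier;
  hneg : carrier -> carrier;
  hadd_nonempty : forall a b, exists c, hadd a b c;
  hadd_assoc : forall a b c x,
    (exists y, hadd a b y /\ hadd y c x) <-> (exists y, hadd b c y /\ hadd a y x);
  hadd_comm : forall a b x, hadd a b x <-> hadd b a x;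
  hadd_zero : forall a x, hadd a hzero x <-> x = a;
  hneg_spec : forall a, hadd a (hneg a) hzero;
  hneg_unique : forall a b, hadd a b hzero -> b = hneg a;
  hadd_rev : forall a b c, hadd a b c -> hadd c (hneg a) b /\ hadd c (hneg b) a;
  hmul_assoc : forall a b c, hmul a (hmul b c) = hmul (hmul a b) c;
  hmul_comm : forall a b, hmul a b = hmul b a;
  hmul_one : forall a, hmul hone a = a;
  hone_neq_zero : hone <> hzero;
  hmul_zero : forall a, hmul a hzero = hzero;
  hmul_distr : forall a b c x,
    (exists y, hadd b c y /\ x = hmul a y) <-> hadd (hmul a b) (hmul a c) x
}.

Section Defs.
Variable R : KrasnerHyperring.

Definition subset (A B : R -> Prop) : Prop := forall x, A x -> B x.
Definition set_eq (A B : R -> Prop) : Prop := forall x, A x <-> B x.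

Definition is_hyperideal (N : R -> Prop) : Prop :=
  (exists x, N x) /\
  (forall a b x, N a -> N b -> hadd R a (hneg R b) x -> N x) /\
  (forall r a, N a -> N (hmul R r a)).

Definition is_empty (A : R -> Prop) : Prop := forall x, ~ A x.

Definition proper (N : R -> Prop) : Prop := exists x, ~ N x.

Definition colon (I : R -> Prop) (a : R) : R -> Prop :=
  fun x => I (hmul R x a).

Definition hprod (K L : R -> Prop) : R -> Prop :=
  fun x => forall J, is_hyperideal J ->
    (forall k l, K k -> L l -> J (hmul R k l)) -> J x.

Definition phi_prime (phi : (R -> Prop) -> (R -> Prop)) (N : R -> Prop) : Prop :=
  is_hyperideal N /\
  forall a b, N (hmul R a b) -> ~ phi N (hmul R a b) -> N a \/ N b.

End Defs.

Arguments subset {R} A B.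
Arguments set_eq {R} A B.
Arguments is_hyperideal {R} N.
Arguments is_empty {R} A.
Arguments proper {R} N.
Arguments colon {R} I a _.
Arguments hprod {R} K L _.
Arguments phi_prime {R} phi N.

(** A hyperideal that is the union of two
    hyperideals equals one of them, because a sum of elements taken from the two
    differences could lie in neither; this gives (ii) <-> (iii).  For (iv) -> (iii)
    apply (iv) to [K = (N : a)] and the principal hyperideal [L] generated by [a];
    for (iii) -> (iv) note that a hyperideal [K] not contained in [N] is contained in
    every hyperideal containing [K - N], since any [k] of [K] lies in [c (+) (-a)] with
    [c, a] in [K - N]. *)
From Stdlib Require Import Classical.
Set Implicit Arguments.

Section Hyperring.
Variable R : KrasnerHyperring.

Lemma hneg_involutive (a : R) : hneg R (hneg R a) = a.
Proof. symmetry. apply hneg_unique, hadd_comm, hneg_spec. Qed.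

Lemma hmul_hneg (a b : R) : hmul R a (hneg R b) = hneg R (hmul R a b).
Proof.
  apply hneg_unique. rewrite <- (hmul_zero R a).
  apply hmul_distr. exists (hzero R). split; [apply hneg_spec | reflexivity].
Qed.

Section Hyperideal.
Variable I : R -> Prop.
Hypothesis HI : is_hyperideal I.

Lemma hyperideal_hsub x y z : I x -> I y -> hadd R x (hneg R y) z -> I z.
Proof. destruct HI as [_ [Hsub _]]. eauto. Qed.

Lemma hyperideal_zero : I (hzero R).
Proof.
  destruct HI as [[x Hx] _]. apply (@hyperideal_hsub x x); auto. apply hneg_spec.
Qed.

Lemma hyperideal_hneg x : I x -> I (hneg R x).
Proof.
  intros Hx. apply (@hyperideal_hsub (hzero R) x); auto using hyperideal_zero.
  apply hadd_comm, hadd_zero. reflexivity.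
Qed.

Lemma hyperideal_hadd x y z : I x -> I y -> hadd R x y z -> I z.
Proof.
  intros Hx Hy Hz. apply (@hyperideal_hsub x (hneg R y)); auto using hyperideal_hneg.
  rewrite hneg_involutive. exact Hz.
Qed.

Lemma hyperideal_hadd_cancell {x y z} : hadd R x y z -> I x -> I z -> I y.
Proof. intros Hz Hx Hzi. apply (@hyperideal_hsub z x); auto. apply (hadd_rev _ _ _ _ Hz). Qed.

Lemma hyperideal_hadd_cancelr {x y z} : hadd R x y z -> I y -> I z -> I x.
Proof. intros Hz Hy Hzi. apply (@hyperideal_hsub z y); auto. apply (hadd_rev _ _ _ _ Hz). Qed.

Lemma hyperideal_hmull r x : I x -> I (hmul R r x).
Proof. destruct HI as [_ [_ Hmul]]. auto. Qed.

Lemma hyperideal_hmulr r x : I x -> I (hmul R x r).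
Proof. rewrite hmul_comm. apply hyperideal_hmull. Qed.

Lemma colon_hyperideal a : is_hyperideal (colon I a).
Proof.
  unfold colon. split; [|split].
  - exists (hzero R). rewrite hmul_comm, hmul_zero. apply hyperideal_zero.
  - intros x y z Hx Hy Hz. rewrite hmul_comm.
    apply (@hyperideal_hsub (hmul R a x) (hmul R a y)).
    + rewrite hmul_comm. exact Hx.
    + rewrite hmul_comm. exact Hy.
    + rewrite <- hmul_hneg. apply hmul_distr. eauto.
  - intros r x Hx. rewrite <- hmul_assoc. apply hyperideal_hmull, Hx.
Qed.

Lemma subset_colon a : subset I (colon I a).
Proof. intros x Hx. apply hyperideal_hmulr, Hx. Qed.

End Hyperideal.

Lemma colon_subset (I J : R -> Prop) a : subset I J -> subset (colon I a) (colon J a).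
Proof. intros HIJ x. apply HIJ. Qed.

Definition principal (a : R) : R -> Prop := fun x => exists r, x = hmul R r a.

Lemma principal_self a : principal a a.
Proof. exists (hone R). symmetry. apply hmul_one. Qed.

Lemma principal_hyperideal a : is_hyperideal (principal a).
Proof.
  split; [|split].
  - exists a. apply principal_self.
  - intros u v x [r ->] [s ->] Hx.
    rewrite (hmul_comm R r a), (hmul_comm R s a), <- hmul_hneg in Hx.
    destruct (proj2 (hmul_distr R a r (hneg R s) x) Hx) as [y [_ ->]].
    exists y. apply hmul_comm.
  - intros r x [s ->]. exists (hmul R r s). apply hmul_assoc.
Qed.

Lemma hprod_hmul (K L : R -> Prop) k l : K k -> L l -> hprod K L (hmul R k l).
Proof. intros Hk Hl J _ HJ. auto. Qed.

Lemma hprod_subset (K L J : R -> Prop) : is_hyperideal J ->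
  (forall k l, K k -> L l -> J (hmul R k l)) -> subset (hprod K L) J.
Proof. intros HJ HKL x Hx. apply Hx; assumption. Qed.

Lemma hprod_colon_principal (N : R -> Prop) a :
  is_hyperideal N -> subset (hprod (colon N a) (principal a)) N.
Proof.
  intros HN. apply hprod_subset; auto. intros k l Hk [r ->].
  rewrite hmul_assoc, (hmul_comm R k r), <- hmul_assoc. apply hyperideal_hmull; auto.
Qed.

Lemma hyperideal_union_cases (A B C : R -> Prop) :
  is_hyperideal A -> is_hyperideal B -> is_hyperideal C ->
  set_eq C (fun x => A x \/ B x) -> set_eq C A \/ set_eq C B.
Proof.
  intros HA HB HC HCAB.
  destruct (classic (subset B A)) as [HBA|HBA].
  { left. intros x. rewrite (HCAB x). intuition. }
  destruct (classic (subset A B)) as [HAB|HAB].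
  { right. intros x. rewrite (HCAB x). intuition. }
  exfalso.
  apply not_all_ex_not in HBA as [y HBA]. apply imply_to_and in HBA as [Hy Hyn].
  apply not_all_ex_not in HAB as [x HAB]. apply imply_to_and in HAB as [Hx Hxn].
  destruct (hadd_nonempty R x y) as [z Hz].
  assert (HCz : C z).
  { apply (hyperideal_hadd HC x y); try apply HCAB; auto. }
  apply HCAB in HCz as [HAz|HBz].
  - apply Hyn. apply (hyperideal_hadd_cancell HA Hz); auto.
  - apply Hxn. apply (hyperideal_hadd_cancelr HB Hz); auto.
Qed.

Lemma hyperideal_subset_of_complement (K N C : R -> Prop) :
  is_hyperideal K -> is_hyperideal N -> is_hyperideal C -> ~ subset K N ->
  (forall k, K k -> ~ N k -> C k) -> subset K C.
Proof.
  intros HK HN HC HKN HC_out k Hk.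
  destruct (classic (N k)) as [HNk|HNk]; auto.
  apply not_all_ex_not in HKN as [a HKN]. apply imply_to_and in HKN as [Ha Han].
  destruct (hadd_nonempty R k a) as [c Hc].
  assert (HKc : K c) by (apply (hyperideal_hadd HK k a); auto).
  assert (HNc : ~ N c) by (intros HNc; apply Han, (hyperideal_hadd_cancell HN Hc); auto).
  apply (hyperideal_hadd_cancelr HC Hc); auto.
Qed.

Section PhiPrime.
Variables (N : R -> Prop) (phi : (R -> Prop) -> (R -> Prop)).
Hypotheses (HN : is_hyperideal N) (HphiN : subset (phi N) N).

Definition colon_union_condition : Prop :=
  forall a, ~ N a -> set_eq (colon N a) (fun x => N x \/ colon (phi N) a x).

Definition colon_dichotomy : Prop :=
  forall a, ~ N a -> set_eq (colon N a) N \/ set_eq (colon N a) (colon (phi N) a).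

Definition hprod_phi_prime : Prop :=
  forall K L, is_hyperideal K -> is_hyperideal L ->
    subset (hprod K L) N -> ~ subset (hprod K L) (phi N) -> subset K N \/ subset L N.

Lemma phi_prime_iff_colon_union : phi_prime phi N <-> colon_union_condition.
Proof.
  unfold colon_union_condition, colon. split.
  - intros [_ Hprime] a Ha x. split.
    + intros Hx. destruct (classic (phi N (hmul R x a))) as [Hphi|Hphi]; auto.
      left. destruct (Hprime x a Hx Hphi); tauto.
    + intros [Hx|Hx]; auto. apply hyperideal_hmulr; auto.
  - intros Hunion. split; auto. intros a b Hab Hphi.
    destruct (classic (N a)) as [Ha|Ha]; auto. right.
    rewrite hmul_comm in Hab, Hphi.
    destruct (proj1 (Hunion a Ha b) Hab) as [Hb|Hb]; tauto.
Qed.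

Hypothesis Hphi : is_hyperideal (phi N) \/ is_empty (phi N).

Lemma colon_union_iff_colon_dichotomy : colon_union_condition <-> colon_dichotomy.
Proof.
  split.
  - intros Hunion a Ha. destruct Hphi as [HP|HE].
    + apply hyperideal_union_cases; auto using colon_hyperideal.
    + left. intros x. rewrite (Hunion a Ha x).
      split; [intros [Hx|Hx]; [exact Hx | destruct (HE _ Hx)] | auto].
  - intros Hcases a Ha x.
    pose proof (@subset_colon N HN a x) as HN_colon.
    pose proof (@colon_subset (phi N) N a HphiN x) as Hphi_colon.
    destruct (Hcases a Ha) as [E|E]; pose proof (E x); tauto.
Qed.

Lemma colon_dichotomy_iff_hprod_phi_prime : colon_dichotomy <-> hprod_phi_prime.
Proof.
  split.
  - intros Hcases K L HK HL Hsub Hnsub.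
    apply NNPP. intros HKL. apply Hnsub.
    assert (HKN : ~ subset K N) by tauto.
    assert (HLN : ~ subset L N) by tauto.
    assert (Hout : forall c, K c -> ~ N c -> subset L (colon (phi N) c)).
    { intros c Hc Hcn.
      assert (HLc : subset L (colon N c)).
      { intros l Hl. unfold colon. rewrite hmul_comm. apply Hsub, hprod_hmul; auto. }
      destruct (Hcases c Hcn) as [E|E].
      - exfalso. apply HLN. intros l Hl. apply E, HLc, Hl.
      - intros l Hl. apply E, HLc, Hl. }
    assert (HP : is_hyperideal (phi N)).
    { destruct Hphi as [HP|HE]; auto. exfalso.
      apply not_all_ex_not in HKN as [c HKN]. apply imply_to_and in HKN as [Hc Hcn].
      destruct HL as [[l Hl] _]. apply (HE _ (Hout c Hc Hcn l Hl)). }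
    apply hprod_subset; auto. intros k l Hk Hl.
    apply (@hyperideal_subset_of_complement K N (colon (phi N) l));
      auto using colon_hyperideal.
    intros c Hc Hcn. unfold colon. rewrite hmul_comm. apply (Hout c Hc Hcn l Hl).
  - intros Hprod a Ha.
    destruct (classic (subset (colon N a) N)) as [Hs|Hs].
    { left. intros x. split; [apply Hs | apply subset_colon; auto]. }
    right. intros x. split; [|apply colon_subset; auto]. intros Hx.
    destruct (classic (subset (hprod (colon N a) (principal a)) (phi N))) as [Hp|Hp].
    { apply Hp, hprod_hmul; auto using principal_self. }
    destruct (Hprod _ _ (colon_hyperideal HN a) (principal_hyperideal a)
                (hprod_colon_principal HN) Hp) as [HK|HL].
    + contradiction.
    + exfalso. apply Ha, HL, principal_self.
Qed.

End PhiPrime.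
End Hyperring.

Theorem mainTheorem1 (R : KrasnerHyperring) (N : R -> Prop)
  (phi : (R -> Prop) -> (R -> Prop))
  (Hphi : forall I : R -> Prop, is_hyperideal I -> is_hyperideal (phi I) \/ is_empty (phi I))
  (HN : is_hyperideal N) (HNp : proper N) (HphiN : subset (phi N) N) :
  (phi_prime phi N <->
     (forall a, ~ N a -> set_eq (colon N a) (fun x => N x \/ colon (phi N) a x))) /\
  ((forall a, ~ N a -> set_eq (colon N a) (fun x => N x \/ colon (phi N) a x)) <->
     (forall a, ~ N a -> set_eq (colon N a) N \/ set_eq (colon N a) (colon (phi N) a))) /\
  ((forall a, ~ N a -> set_eq (colon N a) N \/ set_eq (colon N a) (colon (phi N) a)) <->
     (forall K L, is_hyperideal K -> is_hyperideal L ->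
        subset (hprod K L) N -> ~ subset (hprod K L) (phi N) ->
        subset K N \/ subset L N)).
Proof.
  pose proof (Hphi N HN) as HphiN_cases.
  split; [|split].
  - apply phi_prime_iff_colon_union; assumption.
  - apply colon_union_iff_colon_dichotomy; assumption.
  - apply colon_dichotomy_iff_hprod_phi_prime; assumption.
Qed.
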